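(* For all $n\geq 1$ and $m\geq 2$, $s_{n,m}(122,312)=(n-1)m+1$.
   Context: $[n]_m=\{1^m,\ldots,n^m\}$; a permutation of $[n]_m$ is a sequence of length $nm$ in which each element of $[n]$ appears exactly $m$ times. A sequence avoids a pattern $\pi$ if it has no subsequence order-isomorphic to $\pi$ (same relative order and same equalities among entries). $s_{n,m}(\Pi)$ is the number of permutations of $[n]_m$ avoiding all patterns in $\Pi$. *)

From mathcomp Require Import all_boot.
Set Implicit Arguments. Unset Strict Implicit. Unset Printing Implicit Defensive.

Definition multiset_nm (n m : nat) : seq nat :=
  flatten [seq nseq m i | i <- iota 1 n].

(* The library's
   [permutations s] is a duplicate-free list of all rearrangements of s. *)
Definition perms_nm (n m : nat) : seq (seq nat) := permutations (multiset_nm n m).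

Definition order_iso (t p : seq nat) : bool :=
  (size t == size p) &&
  [forall i : 'I_(size t), forall j : 'I_(size t),
     ((nth 0 t i < nth 0 t j) == (nth 0 p i < nth 0 p j)) &&
     ((nth 0 t i == nth 0 t j) == (nth 0 p i == nth 0 p j))].

Definition contains (s p : seq nat) : bool :=
  [exists b : (size s).-tuple bool, order_iso (mask b s) p].

Definition avoids_all (s : seq nat) (Pi : seq (seq nat)) : bool :=
  all (fun p => ~~ contains s p) Pi.

Definition s_nm (n m : nat) (Pi : seq (seq nat)) : nat :=
  count (fun s => avoids_all s Pi) (perms_nm n m).

From mathcomp Require Import all_boot.
From mathcomp Require Import zify.

(* Write N := n+1 for the largest letter and L for the weakly decreasing
   arrangement of [n]_(m+1).  For every k <= size L, the word
       avoider k := N^m . (L with one extra N inserted at position k)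
   is a permutation of [N]_(m+1) avoiding 122 and 312, and these
   (n(m+1) + 1 pairwise distinct) words are the only avoiders when m >= 1:
   - avoiding 122 with b = N forces all but the last copy of N to form
     a prefix (no smaller letter may precede two copies of N);
   - avoiding 312 with c = N, the letters smaller than N following the
     leading N form a weakly decreasing word, i.e. they spell L. *)

Lemma containsP s p :
  reflect (exists t, subseq t s /\ order_iso t p) (contains s p).
Proof.
apply: (iffP existsP) => [[b iso_b] | [t [/subseqP [b size_b ->] iso_t]]].
  by exists (mask b s); rewrite mask_subseq.
have size_b' : size b == size s by apply/eqP.
by exists (Tuple size_b').
Qed.

Lemma order_iso122 a b c :
  order_iso [:: a; b; c] [:: 1; 2; 2] = (a < b) && (b == c).
Proof.
apply/idP/idP => [/andP [_ /forallP iso] | /andP [lt_ab /eqP <-]].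
  have /forallP iso0 := iso (@Ordinal 3 0 isT).
  have /forallP iso1 := iso (@Ordinal 3 1 isT).
  have /= /andP [/eqP -> _] := iso0 (@Ordinal 3 1 isT).
  by have /= /andP [_ /eqP ->] := iso1 (@Ordinal 3 2 isT).
apply/andP; split=> //.
apply/forallP=> -[[|[|[|i]]] Hi] //; apply/forallP=> -[[|[|[|j]]] Hj] //=;
  apply/andP; split; apply/eqP; lia.
Qed.

Lemma order_iso312 a b c :
  order_iso [:: a; b; c] [:: 3; 1; 2] = (b < c) && (c < a).
Proof.
apply/idP/idP => [/andP [_ /forallP iso] | /andP [lt_bc lt_ca]].
  have /forallP iso1 := iso (@Ordinal 3 1 isT).
  have /forallP iso2 := iso (@Ordinal 3 2 isT).
  have /= /andP [/eqP -> _] := iso1 (@Ordinal 3 2 isT).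
  by have /= /andP [/eqP -> _] := iso2 (@Ordinal 3 0 isT).
apply/andP; split=> //.
apply/forallP=> -[[|[|[|i]]] Hi] //; apply/forallP=> -[[|[|[|j]]] Hj] //=;
  apply/andP; split; apply/eqP; lia.
Qed.

Lemma contains122P s :
  reflect (exists a b, a < b /\ subseq [:: a; b; b] s) (contains s [:: 1; 2; 2]).
Proof.
apply: (iffP (containsP _ _)) => [[t [sub_t iso_t]] | [a [b [lt_ab sub_abb]]]].
  move: (iso_t) => /andP [/eqP size_t _].
  case: t sub_t iso_t size_t => [|a [|b [|c [|]]]] //= sub_t.
  by rewrite order_iso122 => /andP [lt_ab /eqP eq_bc] _; subst c; exists a, b.
by exists [:: a; b; b]; rewrite order_iso122 lt_ab eqxx.
Qed.

Lemma contains312P s :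
  reflect (exists a b c, [/\ a < b, b < c & subseq [:: c; a; b] s])
          (contains s [:: 3; 1; 2]).
Proof.
apply: (iffP (containsP _ _)) => [[t [sub_t iso_t]] | [a [b [c [lt_ab lt_bc sub_cab]]]]].
  move: (iso_t) => /andP [/eqP size_t _].
  case: t sub_t iso_t size_t => [|c [|a [|b [|]]]] //= sub_t.
  by rewrite order_iso312 => /andP [lt_ab lt_bc] _; exists a, b, c.
by exists [:: c; a; b]; rewrite order_iso312 lt_ab lt_bc.
Qed.

Lemma multiset_nmS n m : multiset_nm n.+1 m = multiset_nm n m ++ nseq m n.+1.
Proof. by rewrite /multiset_nm -{1}[n.+1]addn1 iotaD map_cat flatten_cat /= cats0 add1n. Qed.

Lemma mem_multiset_nm n m x : x \in multiset_nm n m -> 0 < x <= n.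
Proof. by case/flattenP=> s /mapP [i]; rewrite mem_iota => ? -> /nseqP [-> _]; lia. Qed.

Lemma size_multiset_nm n m : size (multiset_nm n m) = n * m.
Proof.
elim: n => [|n IHn]; first by [].
by rewrite multiset_nmS size_cat size_nseq IHn mulSn addnC.
Qed.

Lemma filter_multiset_nmS n m :
  [seq x <- multiset_nm n.+1 m | x < n.+1] = multiset_nm n m.
Proof.
rewrite multiset_nmS filter_cat filter_nseq ltnn mul0n cats0.
by apply/all_filterP/allP=> x /mem_multiset_nm; lia.
Qed.

Lemma geq_transitive : transitive geq.
Proof. by move=> a b c /= le_ab le_bc; apply: leq_trans le_bc le_ab. Qed.

Lemma geq_antisymmetric : antisymmetric geq.
Proof. by move=> a b /= le_ab; apply/eqP; rewrite eqn_leq andbC. Qed.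

Lemma sorted_geqP (s : seq nat) :
  reflect (forall x y, subseq [:: x; y] s -> y <= x) (sorted geq s).
Proof.
apply: (iffP idP) => [sorted_s x y sub_xy | no_ascent].
  by have /= /andP [] := subseq_sorted geq_transitive sub_xy sorted_s.
case: s no_ascent => [|x s] //; elim: s x => [|y s IHs] x //= no_ascent.
apply/andP; split; first by apply: no_ascent; rewrite /= !eqxx sub0seq.
by apply: IHs => a b sub_ab; apply: no_ascent (subseq_trans sub_ab (subseq_cons _ _)).
Qed.

Lemma subseq_nseq_skip [T : eqType] [x y : T] [s w : seq T] [k : nat] :
  x != y -> subseq (x :: s) (nseq k y ++ w) -> subseq (x :: s) w.
Proof. by move=> neq_xy; elim: k => [|k IHk] //=; rewrite (negbTE neq_xy). Qed.

Lemma subseq_pair_count (T : eqType) (v : T) s : 1 < count (pred1 v) s -> subseq [:: v; v] s.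
Proof.
elim: s => [|y s IHs] //=; case: (eqVneq y v) => [_ | _] /= count_s; last exact: IHs.
by rewrite sub1seq -has_pred1 has_count.
Qed.

Lemma prefix_of_max [v k : nat] [t : seq nat] :
  (forall x, x < v -> ~~ subseq [:: x; v; v] t) -> all (leq^~ v) t ->
  count (pred1 v) t = k.+1 ->
  exists2 u, t = nseq k v ++ u & count (pred1 v) u = 1.
Proof.
elim: t k => [|x t IHt] k //= no122 /andP [le_xv le_tv].
have no122_t x' : x' < v -> ~~ subseq [:: x'; v; v] t.
  move=> lt_x'v; apply: contra (no122 x' lt_x'v) => sub_t.
  exact: subseq_trans sub_t (subseq_cons _ _).
case: k => [|k] count_t; first by exists (x :: t).
case: eqVneq count_t => [-> | neq_xv] /= count_t.
  have [u -> count_u] := IHt k no122_t le_tv (eq_add_S _ _ count_t).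
  by exists u.
have lt_xv : x < v by lia.
have /subseq_pair_count sub_vv : 1 < count (pred1 v) t.
  by move: count_t; rewrite add0n => ->.
by move: (no122 x lt_xv); rewrite /= eqxx sub_vv.
Qed.

Lemma decreasing_below_head (v : nat) t :
  (forall x y, x < y -> y < v -> ~~ subseq [:: v; x; y] (v :: t)) ->
  sorted geq [seq x <- t | x < v].
Proof.
move=> no312; apply/sorted_geqP => x y; rewrite subseq_filter /= andbT.
case/andP=> /andP [lt_xv lt_yv] sub_xy; rewrite leqNgt; apply/negP => lt_xy.
by move: (no312 x y lt_xy lt_yv); rewrite /= eqxx sub_xy.
Qed.

Definition P122_312 : seq (seq nat) := [:: [:: 1; 2; 2]; [:: 3; 1; 2]].

Section Avoiders.

Variables n m : nat.

Local Notation top := n.+1.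

Definition low : seq nat := sort geq (multiset_nm n m.+1).

Definition avoider (k : nat) : seq nat :=
  nseq m top ++ take k low ++ top :: drop k low.

Lemma size_low : size low = n * m.+1.
Proof. by rewrite size_sort size_multiset_nm. Qed.

Lemma low_below_top : all (fun x => x < top) low.
Proof. by apply/allP=> x; rewrite mem_sort => /mem_multiset_nm; lia. Qed.

Lemma top_notin_low : top \notin low.
Proof. by apply/negP => /(allP low_below_top); rewrite ltnn. Qed.

Lemma low_sorted : sorted geq low.
Proof. by apply: sort_sorted => a b; apply: leq_total. Qed.

Lemma perm_avoider k : perm_eq (avoider k) (multiset_nm top m.+1).
Proof.
have insert_top : perm_eq (take k low ++ top :: drop k low) ([:: top] ++ low).
  by rewrite -cat1s perm_catCA cat_take_drop.
apply: (perm_trans (y := nseq m top ++ [:: top] ++ low)); first by rewrite perm_cat2l.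
rewrite perm_catCA catA perm_catC multiset_nmS.
by apply: perm_cat; [rewrite perm_sort | apply: perm_refl].
Qed.

Lemma filter_avoider k : [seq x <- avoider k | x < top] = low.
Proof.
rewrite /avoider filter_cat filter_nseq ltnn mul0n /= filter_cat /= ltnn.
by rewrite -filter_cat cat_take_drop; apply/all_filterP; apply: low_below_top.
Qed.

Lemma avoider_no_ascent k [x y] :
  x < y -> y < top -> ~~ subseq [:: x; y] (avoider k).
Proof.
move=> lt_xy lt_ytop; apply/negP => sub_xy.
have : subseq [:: x; y] [seq x <- avoider k | x < top].
  by rewrite subseq_filter /= sub_xy andbT lt_ytop (ltn_trans lt_xy lt_ytop).
by rewrite filter_avoider => /(sorted_geqP _ low_sorted); rewrite leqNgt lt_xy.
Qed.

(* An occurrence a b b of 122 would need b = top (ascent a b otherwise),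
   but only one top follows the leading block; an occurrence c a b of 312
   contains the ascent a b below top. *)
Lemma avoider_avoids k : avoids_all (avoider k) P122_312.
Proof.
have le_top x : x \in avoider k -> x <= top.
  by rewrite (perm_mem (perm_avoider k)) => /mem_multiset_nm; lia.
rewrite /avoids_all /= andbT; apply/andP; split.
  apply/contains122P => -[a [b [lt_ab sub_abb]]].
  have le_btop : b <= top by apply/le_top/(mem_subseq sub_abb); rewrite !inE eqxx !orbT.
  have [lt_btop | eq_btop] : b < top \/ b = top by lia.
    move/negP: (avoider_no_ascent k lt_ab lt_btop); apply.
    by apply: subseq_trans _ sub_abb; rewrite /= !eqxx.
  subst b; have neq_atop : a != top by rewrite neq_ltn lt_ab.
  have /(leq_count_subseq (pred1 top)) := subseq_nseq_skip neq_atop sub_abb.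
  rewrite /= eqxx (negbTE neq_atop) count_cat /= eqxx.
  rewrite !(count_memPn _) //; apply: contra top_notin_low.
    exact: mem_drop.
  exact: mem_take.
apply/contains312P => -[a [b [c [lt_ab lt_bc sub_cab]]]].
have le_ctop : c <= top by apply/le_top/(mem_subseq sub_cab); rewrite !inE eqxx.
move: (avoider_no_ascent k lt_ab (leq_trans lt_bc le_ctop)).
by rewrite (subseq_trans (subseq_cons _ _) sub_cab).
Qed.

(* The position k can be read off [avoider k], so distinct k give distinct words. *)
Lemma index_avoider [k] : k <= size low -> index top (drop m (avoider k)) = k.
Proof.
move=> le_k; rewrite /avoider drop_size_cat ?size_nseq // index_cat /= eqxx addn0.
by rewrite (negbTE (contra (@mem_take _ _ _ _) top_notin_low)) size_takel.
Qed.

Lemma avoider_inj k1 k2 :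
  k1 <= size low -> k2 <= size low -> avoider k1 = avoider k2 -> k1 = k2.
Proof. by move=> le_k1 le_k2 eq_k; rewrite -(index_avoider le_k1) eq_k index_avoider. Qed.

Section Completeness.

Variable t : seq nat.
Hypothesis perm_t : perm_eq t (multiset_nm top m.+1).
Hypothesis avoid_t : avoids_all t P122_312.

Lemma mem_le_top x : x \in t -> x <= top.
Proof. by rewrite (perm_mem perm_t) => /mem_multiset_nm; lia. Qed.

(* 122-avoidance: t is m copies of top, then a word with a single top. *)
Lemma avoider_shape :
  exists u1 u2, [/\ t = nseq m top ++ u1 ++ top :: u2 & top \notin u1 ++ u2].
Proof.
have count_t : count (pred1 top) t = m.+1.
  rewrite (permP perm_t) multiset_nmS count_cat count_nseq /= eqxx mul1n.
  by rewrite (count_memPn _) //; apply/negP => /mem_multiset_nm; lia.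
have no122 x : x < top -> ~~ subseq [:: x; top; top] t.
  move=> lt_xtop; case/and3P: avoid_t => avoid122 _ _.
  by apply: contra avoid122 => sub_t; apply/contains122P; exists x, top.
have [u def_t count_u] := prefix_of_max no122 (introT allP mem_le_top) count_t.
have /splitPr def_u : top \in u by rewrite -has_pred1 has_count count_u.
case: def_u def_t count_u => u1 u2 -> count_u; exists u1, u2; split=> //.
move: count_u; rewrite count_cat /= eqxx add1n addnS => /eqP; rewrite eqSS.
by rewrite -count_cat => /eqP/count_memPn.
Qed.

(* 312-avoidance: the letters of t below top spell [low]. *)
Lemma below_top_low : 0 < m -> [seq x <- t | x < top] = low.
Proof.
move=> m_gt0; have [u1 [u2 [def_t _]]] := avoider_shape.
apply: (sorted_eq geq_transitive geq_antisymmetric); last first.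
- by rewrite (perm_trans (perm_filter _ perm_t)) // filter_multiset_nmS perm_sym perm_sort.
- exact: low_sorted.
have [t' def_t'] : exists t', t = top :: t'.
  by exists (nseq m.-1 top ++ u1 ++ top :: u2); rewrite def_t; case: (m) m_gt0.
rewrite def_t' /= ltnn; apply: decreasing_below_head => x y lt_xy lt_ytop.
case/and3P: avoid_t => _ avoid312 _; rewrite -def_t'.
by apply: contra avoid312 => sub_t; apply/contains312P; exists x, y, top.
Qed.

Lemma avoider_complete : 0 < m -> exists2 k, k <= size low & t = avoider k.
Proof.
move=> m_gt0; have [u1 [u2 [def_t top_notin_u]]] := avoider_shape.
have def_low : u1 ++ u2 = low.
  rewrite -(below_top_low m_gt0) def_t filter_cat filter_nseq ltnn /= filter_cat /= ltnn.
  rewrite -filter_cat; apply/esym/all_filterP/allP => x x_u.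
  have : x <= top.
    apply: mem_le_top; rewrite def_t !mem_cat inE.
    by move: (x_u); rewrite mem_cat => /orP [] ->; rewrite !orbT.
  by rewrite leq_eqVlt; case: eqVneq x_u => // ->; rewrite (negbTE top_notin_u).
exists (size u1); first by rewrite -def_low size_cat leq_addr.
by rewrite def_t /avoider -def_low take_size_cat // drop_size_cat.
Qed.

End Completeness.

End Avoiders.

Lemma count_avoiders n m :
  0 < m -> s_nm n.+1 m.+1 P122_312 = (n * m.+1).+1.
Proof.
move=> m_gt0.
pose candidates := [seq avoider n m k | k <- iota 0 (size (low n m)).+1].
have uniq_candidates : uniq candidates.
  rewrite map_inj_in_uniq ?iota_uniq // => k1 k2.
  by rewrite !mem_iota /= !add0n !ltnS; apply: avoider_inj.
have mem_candidates t : (t \in [seq s <- perms_nm n.+1 m.+1 | avoids_all s P122_312])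
                        = (t \in candidates).
  rewrite mem_filter mem_permutations; apply/andP/mapP => [[avoid_t perm_t] | [k _ ->]].
    have [k le_k ->] := avoider_complete n m t perm_t avoid_t m_gt0.
    by exists k; rewrite // mem_iota /= add0n ltnS.
  by rewrite avoider_avoids perm_avoider.
rewrite /s_nm -size_filter.
rewrite (perm_size (uniq_perm (filter_uniq _ (permutations_uniq _)) uniq_candidates
                              mem_candidates)).
by rewrite size_map size_iota size_low.
Qed.

Theorem theorem7 (n m : nat) :
  1 <= n -> 2 <= m ->
  s_nm n m [:: [:: 1; 2; 2]; [:: 3; 1; 2]] = (n - 1) * m + 1.
Proof.
case: n => [|n] // _; case: m => [|m] // m_gt1.
by rewrite (count_avoiders n m m_gt1) subn1 addn1.
Qed.
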